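(* Let $k_0,k_1,k_{-1},k_2,e_T$ be positive real numbers and consider the system \[ \dot s = k_0-k_1(e_T-c)s+k_{-1}c,\qquad \dot c = k_1(e_T-c)s-(k_{-1}+k_2)c . \] Let $W_1:=\{(s,c): s\ge 0,\ \max\{0,\frac{k_1e_Ts-k_0}{k_1s+k_{-1}}\}\le c\le \frac{k_1e_Ts}{k_1s+k_{-1}+k_2}\}$, let $w(s):=\frac{k_1e_Ts}{k_1s+k_{-1}+k_2}$, and set \[ \varepsilon_c:=\frac{k_1e_T}{k_{-1}+k_2},\qquad \tau_0:=k_{-1}+k_2,\qquad \varepsilon^*:=\frac{k_0k_1e_T}{(k_{-1}+k_2)^2}. \] Let $(s(t),c(t))$ be a solution with initial value in $W_1$, let $L(t):=|c(t)-w(s(t))|$, and let $v:=\sup_{t\ge0}|\dot s(t)|$ along this solution. Then for all $t\ge 0$, with $\tau:=\tau_0 t=(k_{-1}+k_2)t$, \[ L(t)^2\le L(0)^2e^{-\tau}+\frac{(\varepsilon_c v)^2}{\tau_0^2}\left(1-e^{-\tau}\right) \quad\text{and}\quad L(t)^2\le L(0)^2e^{-\tau}+\frac{(\varepsilon_c k_0)^2}{(k_{-1}+k_2)^2}=L(0)^2e^{-\tau}+(\varepsilon^* )^2 . \] In particular the solution approaches the curve $c=w(s)$ up to an error $(\varepsilon^* )^2$ in $L^2$, at exponential rate $k_{-1}+k_2$.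
   Context: The curve $c=w(s)$ is the quasi-steady-state (QSS) variety, i.e. the $c$-nullcline of the system; $W_1$ is the region between the $s$-nullcline (or the $s$-axis) and the $c$-nullcline. *)

From Stdlib Require Import Reals.
From Coquelicot Require Import Coquelicot.
Open Scope R_scope.

Definition fs (k0 k1 km1 eT s c : R) : R := k0 - k1 * (eT - c) * s + km1 * c.
Definition fc (k1 km1 k2 eT s c : R) : R := k1 * (eT - c) * s - (km1 + k2) * c.

Definition w (k1 km1 k2 eT s : R) : R := k1 * eT * s / (k1 * s + km1 + k2).

Definition W1 (k0 k1 km1 k2 eT s c : R) : Prop :=
  0 <= s /\
  Rmax 0 ((k1 * eT * s - k0) / (k1 * s + km1)) <= c /\
  c <= w k1 km1 k2 eT s.

Definition eps_c (k1 km1 k2 eT : R) : R := k1 * eT / (km1 + k2).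
Definition tau0 (km1 k2 : R) : R := km1 + k2.
Definition eps_star (k0 k1 km1 k2 eT : R) : R := k0 * k1 * eT / (km1 + k2) ^ 2.

From Stdlib Require Import Reals Lra Psatz.
From Coquelicot Require Import Coquelicot.
Open Scope R_scope.

(* First, W1 lies in the cone where s, ds/dt and dc/dt are all
   nonnegative, and this cone is forward invariant: along a solution the
   rates p = ds/dt and q = dc/dt obey the linear system
   p' = -k1 (eT - c) p + (k1 s + km1) q,  q' = k1 (eT - c) p - (k1 s + km1 + k2) q,
   so the squared negative parts of (p, q, s) satisfy a Gronwall inequality
   and stay 0.  Second, u = c - w(s) satisfies
   u' = -(k1 s + km1 + k2) u - w'(s) ds/dt  with  0 <= w'(s) <= eps_c,
   hence (u^2)' <= -tau0 (u^2 - (eps_c V / tau0)^2) whenever |ds/dt| <= V,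
   and u^2 relaxes exponentially to below (eps_c V / tau0)^2.  On the cone,
   0 <= ds/dt <= k0, which gives the second bound with V = k0. *)

Lemma is_derive_continuity_pt (f : R -> R) x l :
  is_derive f x l -> continuity_pt f x.
Proof.
  intros Hf. apply derivable_continuous_pt. exists l. now apply is_derive_Reals.
Qed.

Lemma is_derive_bounded_on (f df : R -> R) a b :
  a <= b -> (forall t, a <= t <= b -> is_derive f t (df t)) ->
  exists B, forall t, a <= t <= b -> Rabs (f t) <= B.
Proof.
  intros Hab Hf.
  destruct (continuity_ab_maj (fun t => Rabs (f t)) a b Hab) as [m [Hm _]].
  - intros t Ht. apply continuity_pt_comp with (f2 := Rabs).
    + exact (is_derive_continuity_pt _ _ _ (Hf t Ht)).
    + apply Rcontinuity_abs.
  - now exists (Rabs (f m)).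
Qed.

Lemma le_of_is_derive_nonpos (g dg : R -> R) a b :
  a <= b ->
  (forall t, a <= t <= b -> is_derive g t (dg t)) ->
  (forall t, a <= t <= b -> dg t <= 0) ->
  g b <= g a.
Proof.
  intros Hab Hg Hneg.
  destruct (Req_dec a b) as [<-|Hne]; [lra|].
  destruct (MVT_cor3 g dg a b) as [t [Hat [Htb ->]]].
  - lra.
  - intros t Hat Htb. apply is_derive_Reals, Hg. lra.
  - assert (dg t <= 0) by (apply Hneg; lra). nra.
Qed.

Lemma le_exp_of_is_derive_le_linear (y dy : R -> R) lam y_eq T :
  0 <= T ->
  (forall t, 0 <= t <= T -> is_derive y t (dy t)) ->
  (forall t, 0 <= t <= T -> dy t <= lam * (y t - y_eq)) ->
  y T - y_eq <= (y 0 - y_eq) * exp (lam * T).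
Proof.
  intros HT Hy Hrate.
  set (g := fun t => (y t - y_eq) * exp (- (lam * t))).
  assert (Hg : g T <= g 0).
  { apply (le_of_is_derive_nonpos g (fun t => (dy t - lam * (y t - y_eq)) * exp (- (lam * t))));
      [lra| |].
    - intros t Ht. unfold g. specialize (Hy t Ht).
      auto_derive; [exists (dy t); exact Hy|].
      replace (Derive (fun x => y x) t) with (dy t) by (symmetry; exact (is_derive_unique _ _ _ Hy)).
      ring.
    - intros t Ht. pose proof (exp_pos (- (lam * t))). specialize (Hrate t Ht). nra. }
  unfold g in Hg. rewrite Rmult_0_r, Ropp_0, exp_0, Rmult_1_r in Hg.
  pose proof (exp_pos (lam * T)) as HeT.
  assert (Hinv : exp (- (lam * T)) * exp (lam * T) = 1)
    by (rewrite <- exp_plus, Rplus_opp_l; apply exp_0).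
  apply (Rmult_le_compat_r (exp (lam * T))) in Hg; [|lra].
  rewrite Rmult_assoc, Hinv, Rmult_1_r in Hg. exact Hg.
Qed.

Lemma sq_rate_le u D g A tau :
  0 < tau -> tau <= D -> Rabs g <= A ->
  2 * u * (- D * u - g) <= - tau * (u ^ 2 - (A / tau) ^ 2).
Proof.
  intros Htau HD Hg.
  assert (Hug : - (u * g) <= Rabs u * A).
  { apply Rle_trans with (Rabs (u * g)).
    - rewrite <- Rabs_Ropp. apply Rle_abs.
    - rewrite Rabs_mult. apply Rmult_le_compat_l; [apply Rabs_pos | exact Hg]. }
  assert (Hamgm : 2 * Rabs u * A <= tau * u ^ 2 + A ^ 2 / tau).
  { apply (Rmult_le_reg_l tau); [lra|].
    replace (tau * (tau * u ^ 2 + A ^ 2 / tau)) with (tau ^ 2 * u ^ 2 + A ^ 2) by (field; lra).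
    rewrite <- (pow2_abs u). pose proof (pow2_ge_0 (tau * Rabs u - A)). nra. }
  assert (HDu : tau * u ^ 2 <= D * u ^ 2) by (apply Rmult_le_compat_r; [apply pow2_ge_0 | lra]).
  replace (- tau * (u ^ 2 - (A / tau) ^ 2)) with (- tau * u ^ 2 + A ^ 2 / tau) by (field; lra).
  lra.
Qed.

Definition nonpos_part (x : R) : R := Rmin x 0.

Definition neg_energy (x y z : R) : R :=
  nonpos_part x ^ 2 + nonpos_part y ^ 2 + nonpos_part z ^ 2.

Lemma nonpos_part_cases x :
  (x <= 0 /\ nonpos_part x = x) \/ (0 <= x /\ nonpos_part x = 0).
Proof. unfold nonpos_part, Rmin; destruct Rle_dec; [left | right]; lra. Qed.

Lemma nonpos_part_le0 x : nonpos_part x <= 0.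
Proof. apply Rmin_r. Qed.

Lemma nonpos_part_le x : nonpos_part x <= x.
Proof. apply Rmin_l. Qed.

Lemma nonpos_part_mul_self x : nonpos_part x * x = nonpos_part x ^ 2.
Proof. destruct (nonpos_part_cases x) as [[_ ->] | [_ ->]]; ring. Qed.

Lemma is_derive_nonpos_part_sq x :
  is_derive (fun y => nonpos_part y ^ 2) x (2 * nonpos_part x).
Proof.
  apply is_derive_Reals. intros eps Heps. exists (mkposreal eps Heps).
  intros h Hh0 Hh. simpl in Hh.
  set (rem := nonpos_part (x + h) ^ 2 - nonpos_part x ^ 2 - 2 * nonpos_part x * h).
  assert (Hrem : Rabs rem <= Rabs h * Rabs h).
  { rewrite <- Rabs_mult. unfold rem, nonpos_part, Rmin.
    rewrite (Rabs_right (h * h)) by nra.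
    destruct (Rle_dec (x + h) 0), (Rle_dec x 0); apply Rabs_le; split; nra. }
  replace ((nonpos_part (x + h) ^ 2 - nonpos_part x ^ 2) / h - 2 * nonpos_part x)
    with (rem / h) by (unfold rem; field; exact Hh0).
  pose proof (Rabs_pos_lt h Hh0).
  rewrite Rabs_div by exact Hh0. apply Rle_lt_trans with (Rabs h); [|exact Hh].
  apply Rle_div_l; lra.
Qed.

Lemma is_derive_nonpos_part_sq_comp (f : R -> R) t df :
  is_derive f t df ->
  is_derive (fun t => nonpos_part (f t) ^ 2) t (2 * nonpos_part (f t) * df).
Proof.
  intros Hf.
  replace (2 * nonpos_part (f t) * df) with (scal df (2 * nonpos_part (f t)))
    by (rewrite Rmult_comm; reflexivity).
  exact (is_derive_comp _ _ t _ _ (is_derive_nonpos_part_sq (f t)) Hf).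
Qed.

Lemma is_derive_neg_energy (f g h : R -> R) t df dg dh :
  is_derive f t df -> is_derive g t dg -> is_derive h t dh ->
  is_derive (fun t => neg_energy (f t) (g t) (h t)) t
    (2 * (nonpos_part (f t) * df + nonpos_part (g t) * dg + nonpos_part (h t) * dh)).
Proof.
  intros Hf Hg Hh. unfold neg_energy.
  replace (2 * _) with (2 * nonpos_part (f t) * df + 2 * nonpos_part (g t) * dg
                        + 2 * nonpos_part (h t) * dh) by ring.
  apply is_derive_nonpos_part_sq_comp in Hf, Hg, Hh.
  exact (is_derive_plus _ _ t _ _ (is_derive_plus _ _ t _ _ Hf Hg) Hh).
Qed.

Lemma neg_energy_of_nonneg x y z :
  0 <= x -> 0 <= y -> 0 <= z -> neg_energy x y z = 0.
Proof. intros. unfold neg_energy, nonpos_part. rewrite !Rmin_right by lra. ring. Qed.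

Lemma nonneg_of_neg_energy_le0 x y z :
  neg_energy x y z <= 0 -> 0 <= x /\ 0 <= y /\ 0 <= z.
Proof.
  unfold neg_energy. intros HN.
  assert (Hsq : forall a, nonpos_part a ^ 2 <= 0 -> 0 <= a)
    by (intros a; destruct (nonpos_part_cases a) as [[? ->] | [? _]]; nra).
  repeat split; apply Hsq; nra.
Qed.

(* Where a >= 0 the term is controlled by the negative part X of x, where
   a < 0 by the nonpositive lower bound b Z of a. *)
Lemma cross_term_le Y a x X Z A b B :
  Y <= 0 -> X <= 0 -> X <= x -> x <= B -> 0 <= B -> Z <= 0 -> 0 <= b -> b * Z <= a ->
  Rabs a <= A -> Y * a * x <= A * (Y * X) + b * B * (Y * Z).
Proof.
  intros HY HX HXx HxB HB HZ Hb HaZ HA.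
  assert (0 <= Y * X) by nra.
  assert (0 <= b * B * (Y * Z)) by (apply Rmult_le_pos; nra).
  destruct (Rle_lt_dec 0 a) as [Ha | Ha].
  - rewrite Rabs_right in HA by lra.
    assert (Y * a <= 0) by nra.
    assert (Y * a * x <= Y * a * X) by (apply Rmult_le_compat_neg_l; lra).
    nra.
  - assert (0 <= A) by (pose proof (Rabs_pos a); lra).
    assert (0 <= Y * a) by nra.
    assert (Y * a * x <= Y * a * B) by (apply Rmult_le_compat_l; lra).
    assert (Y * a <= Y * (b * Z)) by (apply Rmult_le_compat_neg_l; lra).
    nra.
Qed.

Section ReactionSystem.

Variables k0 k1 km1 k2 eT : R.
Hypotheses (k1_pos : 0 < k1) (km1_pos : 0 < km1) (k2_pos : 0 < k2) (eT_pos : 0 < eT).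

Lemma is_derive_fs_comp (s c : R -> R) t ds dc :
  is_derive s t ds -> is_derive c t dc ->
  is_derive (fun t => fs k0 k1 km1 eT (s t) (c t)) t
    (- k1 * (eT - c t) * ds + (k1 * s t + km1) * dc).
Proof.
  intros Hs Hc. unfold fs.
  auto_derive; [repeat split; first [exists ds; exact Hs | exists dc; exact Hc]|].
  replace (Derive (fun x => s x) t) with ds by (symmetry; exact (is_derive_unique _ _ _ Hs)).
  replace (Derive (fun x => c x) t) with dc by (symmetry; exact (is_derive_unique _ _ _ Hc)).
  ring.
Qed.

Lemma is_derive_fc_comp (s c : R -> R) t ds dc :
  is_derive s t ds -> is_derive c t dc ->
  is_derive (fun t => fc k1 km1 k2 eT (s t) (c t)) t
    (k1 * (eT - c t) * ds - (k1 * s t + km1 + k2) * dc).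
Proof.
  intros Hs Hc. unfold fc.
  auto_derive; [repeat split; first [exists ds; exact Hs | exists dc; exact Hc]|].
  replace (Derive (fun x => s x) t) with ds by (symmetry; exact (is_derive_unique _ _ _ Hs)).
  replace (Derive (fun x => c x) t) with dc by (symmetry; exact (is_derive_unique _ _ _ Hc)).
  ring.
Qed.

(* eT - c is the only coefficient of the rate system without a sign; on the
   cone it is nonnegative, and off it the excess c - eT is controlled by the
   negative parts of s and dc/dt. *)
Lemma fc_bounds_excess s c B : Rabs c <= B ->
  (km1 + k2) * (c - eT)
  <= - k1 * (eT + B) * nonpos_part s - nonpos_part (fc k1 km1 k2 eT s c).
Proof.
  intros Hc. apply Rabs_le_between in Hc.
  pose proof (nonpos_part_le0 s). pose proof (nonpos_part_le0 (fc k1 km1 k2 eT s c)).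
  pose proof (nonpos_part_le (fc k1 km1 k2 eT s c)).
  destruct (Rle_lt_dec c eT) as [Hle | Hlt].
  - assert (0 <= k1 * (eT + B)) by nra. nra.
  - assert ((km1 + k2) * (c - eT) <= k1 * (eT - c) * s - nonpos_part (fc k1 km1 k2 eT s c))
      by (unfold fc in *; nra).
    destruct (nonpos_part_cases s) as [[? ->] | [? ->]].
    + assert (0 <= k1 * (- s) * (2 * eT + B - c)) by (apply Rmult_le_pos; nra). nra.
    + assert (k1 * (eT - c) * s <= 0) by (apply Rmult_le_0_r; nra). nra.
Qed.

Lemma pq_coupling_le B s p q :
  0 <= B -> Rabs s <= B -> q <= B ->
  nonpos_part p * ((k1 * s + km1) * q) <= (2 * k1 * B + km1) * neg_energy p q s.
Proof.
  intros HB Hs Hq. apply Rabs_le_between in Hs.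
  pose proof (nonpos_part_le0 p). pose proof (nonpos_part_le0 q).
  pose proof (nonpos_part_le0 s). pose proof (nonpos_part_le q).
  assert (Hcross : nonpos_part p * (k1 * s + km1) * q
                   <= (k1 * B + km1) * (nonpos_part p * nonpos_part q)
                      + k1 * B * (nonpos_part p * nonpos_part s)).
  { apply cross_term_le; try lra.
    - pose proof (nonpos_part_le s). nra.
    - apply Rabs_le; split; nra. }
  unfold neg_energy.
  assert ((k1 * B + km1) * (nonpos_part p * nonpos_part q)
          <= (k1 * B + km1) * (nonpos_part p ^ 2 + nonpos_part q ^ 2))
    by (apply Rmult_le_compat_l; nra).
  assert (k1 * B * (nonpos_part p * nonpos_part s)
          <= k1 * B * (nonpos_part p ^ 2 + nonpos_part s ^ 2))
    by (apply Rmult_le_compat_l; nra).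
  assert (0 <= (k1 * B + km1) * nonpos_part s ^ 2) by (apply Rmult_le_pos; nra).
  assert (0 <= k1 * B * nonpos_part q ^ 2) by (apply Rmult_le_pos; nra).
  lra.
Qed.

Lemma qp_coupling_le B s c p :
  0 <= B -> Rabs c <= B -> p <= B ->
  nonpos_part (fc k1 km1 k2 eT s c) * (k1 * (eT - c) * p)
  <= (k1 * (eT + B) + k1 / (km1 + k2) * B * (k1 * (eT + B) + 1))
     * neg_energy p (fc k1 km1 k2 eT s c) s.
Proof.
  intros HB Hc Hp.
  pose proof (fc_bounds_excess s c B Hc) as Hexcess.
  set (Q := nonpos_part (fc k1 km1 k2 eT s c)) in *.
  set (P := nonpos_part p). set (S := nonpos_part s) in *.
  set (Ka := k1 * (eT + B)). set (Kz := k1 / (km1 + k2) * B).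
  assert (HQ : Q <= 0) by apply nonpos_part_le0.
  assert (HP : P <= 0) by apply nonpos_part_le0.
  assert (HS : S <= 0) by apply nonpos_part_le0.
  assert (HPp : P <= p) by apply nonpos_part_le.
  apply Rabs_le_between in Hc.
  assert (HKa : 0 <= Ka) by (unfold Ka; nra).
  assert (HKz : 0 <= Kz)
    by (unfold Kz; apply Rmult_le_pos; [apply Rlt_le, Rdiv_lt_0_compat |]; lra).
  assert (Hlow : k1 / (km1 + k2) * (Ka * S + Q) <= k1 * (eT - c)).
  { unfold Rdiv. rewrite Rmult_assoc. apply Rmult_le_compat_l; [lra|].
    apply (Rmult_le_reg_l (km1 + k2)); [lra|].
    rewrite <- Rmult_assoc, Rinv_r, Rmult_1_l by lra. unfold Ka. lra. }
  assert (Hcross : Q * (k1 * (eT - c)) * p <= Ka * (Q * P) + Kz * (Q * (Ka * S + Q))).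
  { unfold Kz. apply cross_term_le; try lra.
    - nra.
    - apply Rlt_le, Rdiv_lt_0_compat; lra.
    - apply Rabs_le. unfold Ka. split; nra. }
  unfold neg_energy. fold P Q S.
  assert (Ka * (Q * P) <= Ka * (P ^ 2 + Q ^ 2 + S ^ 2)) by (apply Rmult_le_compat_l; nra).
  assert (Kz * (Q * (Ka * S + Q)) <= Kz * ((Ka + 1) * (P ^ 2 + Q ^ 2 + S ^ 2))).
  { apply Rmult_le_compat_l; [lra|].
    assert (Ka * (Q * S) <= Ka * (P ^ 2 + Q ^ 2 + S ^ 2)) by (apply Rmult_le_compat_l; nra).
    nra. }
  nra.
Qed.

(* The left-hand side is half the derivative of neg_energy (ds/dt) (dc/dt) s
   along a solution. *)
Lemma neg_energy_rate_le B : 0 <= B -> exists M, forall s c p q,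
  Rabs s <= B -> Rabs c <= B -> Rabs p <= B -> Rabs q <= B ->
  q = fc k1 km1 k2 eT s c ->
  nonpos_part p * (- k1 * (eT - c) * p + (k1 * s + km1) * q)
  + nonpos_part q * (k1 * (eT - c) * p - (k1 * s + km1 + k2) * q)
  + nonpos_part s * p <= M * neg_energy p q s.
Proof.
  intros HB.
  set (Ka := k1 * (eT + B)).
  set (Kqp := k1 * (eT + B) + k1 / (km1 + k2) * B * (k1 * (eT + B) + 1)).
  exists (Ka + (2 * k1 * B + km1) + Kqp + k1 * B + 1).
  intros s c p q Hs Hc Hp Hq Hfc.
  pose proof (pq_coupling_le B s p q HB Hs (proj2 (proj1 (Rabs_le_between _ _) Hq))) as Hpq.
  pose proof (qp_coupling_le B s c p HB Hc (proj2 (proj1 (Rabs_le_between _ _) Hp))) as Hqp.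
  rewrite <- Hfc in Hqp. fold Kqp in Hqp.
  apply Rabs_le_between in Hs, Hc.
  pose proof (nonpos_part_le0 s). pose proof (nonpos_part_le p).
  assert (Hp_damp : nonpos_part p * (- k1 * (eT - c) * p) <= Ka * neg_energy p q s).
  { replace (nonpos_part p * (- k1 * (eT - c) * p))
      with (k1 * (c - eT) * nonpos_part p ^ 2) by (rewrite <- nonpos_part_mul_self; ring).
    unfold neg_energy.
    assert (k1 * (c - eT) * nonpos_part p ^ 2 <= Ka * nonpos_part p ^ 2)
      by (apply Rmult_le_compat_r; [apply pow2_ge_0 | unfold Ka; nra]).
    assert (0 <= Ka * (nonpos_part q ^ 2 + nonpos_part s ^ 2))
      by (apply Rmult_le_pos; [unfold Ka; nra | nra]).
    lra. }
  assert (Hq_damp : nonpos_part q * (- (k1 * s + km1 + k2) * q) <= k1 * B * neg_energy p q s).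
  { replace (nonpos_part q * (- (k1 * s + km1 + k2) * q))
      with (- (k1 * s + km1 + k2) * nonpos_part q ^ 2) by (rewrite <- nonpos_part_mul_self; ring).
    unfold neg_energy.
    assert (- (k1 * s + km1 + k2) * nonpos_part q ^ 2 <= k1 * B * nonpos_part q ^ 2)
      by (apply Rmult_le_compat_r; [apply pow2_ge_0 | nra]).
    assert (0 <= k1 * B * (nonpos_part p ^ 2 + nonpos_part s ^ 2))
      by (apply Rmult_le_pos; nra).
    lra. }
  assert (Hs_term : nonpos_part s * p <= neg_energy p q s).
  { assert (nonpos_part s * p <= nonpos_part s * nonpos_part p)
      by (apply Rmult_le_compat_neg_l; lra).
    unfold neg_energy. nra. }
  lra.
Qed.

Lemma nonneg_rates_invariant (s c : R -> R) :
  (forall t, 0 <= t -> is_derive s t (fs k0 k1 km1 eT (s t) (c t))) ->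
  (forall t, 0 <= t -> is_derive c t (fc k1 km1 k2 eT (s t) (c t))) ->
  0 <= s 0 -> 0 <= fs k0 k1 km1 eT (s 0) (c 0) -> 0 <= fc k1 km1 k2 eT (s 0) (c 0) ->
  forall T, 0 <= T ->
    0 <= s T /\ 0 <= fs k0 k1 km1 eT (s T) (c T) /\ 0 <= fc k1 km1 k2 eT (s T) (c T).
Proof.
  intros Hs Hc Hs0 Hp0 Hq0 T HT.
  set (p := fun t => fs k0 k1 km1 eT (s t) (c t)) in *.
  set (q := fun t => fc k1 km1 k2 eT (s t) (c t)) in *.
  set (dp := fun t => - k1 * (eT - c t) * p t + (k1 * s t + km1) * q t).
  set (dq := fun t => k1 * (eT - c t) * p t - (k1 * s t + km1 + k2) * q t).
  assert (Hp : forall t, 0 <= t -> is_derive p t (dp t))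
    by (intros t Ht; apply is_derive_fs_comp; auto).
  assert (Hq : forall t, 0 <= t -> is_derive q t (dq t))
    by (intros t Ht; apply is_derive_fc_comp; auto).
  destruct (is_derive_bounded_on s p 0 T HT) as [Bs HBs]; [intros; apply Hs; lra|].
  destruct (is_derive_bounded_on c q 0 T HT) as [Bc HBc]; [intros; apply Hc; lra|].
  destruct (is_derive_bounded_on p dp 0 T HT) as [Bp HBp]; [intros; apply Hp; lra|].
  destruct (is_derive_bounded_on q dq 0 T HT) as [Bq HBq]; [intros; apply Hq; lra|].
  set (B := Rmax (Rmax Bs Bc) (Rmax Bp Bq)).
  assert (HBt : forall t, 0 <= t <= T ->
            Rabs (s t) <= B /\ Rabs (c t) <= B /\ Rabs (p t) <= B /\ Rabs (q t) <= B).
  { intros t Ht. unfold B. rewrite !Rmax_Rle.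
    specialize (HBs t Ht). specialize (HBc t Ht). specialize (HBp t Ht). specialize (HBq t Ht).
    tauto. }
  assert (HB : 0 <= B)
    by (destruct (HBt 0 ltac:(lra)) as [? _]; pose proof (Rabs_pos (s 0)); lra).
  destruct (neg_energy_rate_le B HB) as [M HM].
  set (N := fun t => neg_energy (p t) (q t) (s t)).
  assert (HNT : N T - 0 <= (N 0 - 0) * exp (2 * M * T)).
  { apply (le_exp_of_is_derive_le_linear N
      (fun t => 2 * (nonpos_part (p t) * dp t + nonpos_part (q t) * dq t
                     + nonpos_part (s t) * p t))); [exact HT | |].
    - intros t Ht. apply is_derive_neg_energy; [apply Hp | apply Hq | apply Hs]; lra.
    - intros t Ht. destruct (HBt t Ht) as [Hst [Hct [Hpt Hqt]]].
      pose proof (HM (s t) (c t) (p t) (q t) Hst Hct Hpt Hqt eq_refl).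
      unfold N, dp, dq. lra. }
  assert (HN0 : N 0 = 0) by (apply neg_energy_of_nonneg; assumption).
  rewrite HN0 in HNT.
  destruct (nonneg_of_neg_energy_le0 (p T) (q T) (s T)) as [? [? ?]];
    [unfold N in HNT; lra|].
  auto.
Qed.

Lemma W1_nonneg_rates s c : W1 k0 k1 km1 k2 eT s c ->
  0 <= s /\ 0 <= fs k0 k1 km1 eT s c /\ 0 <= fc k1 km1 k2 eT s c.
Proof.
  intros [Hs [Hlo Hhi]].
  assert (Hlo' : (k1 * eT * s - k0) / (k1 * s + km1) <= c)
    by (eapply Rle_trans; [apply Rmax_r | exact Hlo]).
  apply Rle_div_l in Hlo'; [|nra].
  unfold w in Hhi. apply (Rmult_le_compat_r (k1 * s + km1 + k2)) in Hhi; [|nra].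
  unfold Rdiv in Hhi. rewrite Rmult_assoc, Rinv_l, Rmult_1_r in Hhi by nra.
  unfold fs, fc. repeat split; lra.
Qed.

Lemma fs_le_k0 s c : 0 <= s -> 0 <= fc k1 km1 k2 eT s c -> fs k0 k1 km1 eT s c <= k0.
Proof.
  unfold fs, fc. intros Hs Hq.
  destruct (Rle_lt_dec 0 c) as [Hc | Hc].
  - assert (0 <= k2 * c) by nra. lra.
  - assert (k1 * (c * s) <= 0) by (apply Rmult_le_0_l; nra).
    assert (0 <= k1 * eT * s) by (apply Rmult_le_pos; nra).
    assert (km1 * c <= 0) by nra.
    nra.
Qed.

Lemma fc_qss_form s c : 0 <= s ->
  fc k1 km1 k2 eT s c = - (k1 * s + km1 + k2) * (c - w k1 km1 k2 eT s).
Proof. intros Hs. unfold fc, w. field. nra. Qed.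

Lemma w_derive_bounds x : 0 <= x ->
  exists dw, is_derive (w k1 km1 k2 eT) x dw /\ 0 <= dw <= eps_c k1 km1 k2 eT.
Proof.
  intros Hx.
  assert (Hnum : 0 < k1 * eT * (km1 + k2)) by (repeat apply Rmult_lt_0_compat; lra).
  assert (Hden : 0 < (k1 * x + km1 + k2) ^ 2) by (apply pow_lt; nra).
  exists (k1 * eT * (km1 + k2) / (k1 * x + km1 + k2) ^ 2). split.
  - unfold w. auto_derive; [nra | field; nra].
  - unfold eps_c. split.
    + apply Rlt_le, Rdiv_lt_0_compat; assumption.
    + unfold Rdiv.
      replace (k1 * eT * / (km1 + k2)) with (k1 * eT * (km1 + k2) * / (km1 + k2) ^ 2)
        by (field; lra).
      apply Rmult_le_compat_l; [lra|].
      apply Rinv_le_contravar; [nra|]. apply pow_incr. nra.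
Qed.

Lemma qss_deviation_sq_le (s c : R -> R) V :
  (forall t, 0 <= t -> is_derive s t (fs k0 k1 km1 eT (s t) (c t))) ->
  (forall t, 0 <= t -> is_derive c t (fc k1 km1 k2 eT (s t) (c t))) ->
  (forall t, 0 <= t -> 0 <= s t) ->
  (forall t, 0 <= t -> Rabs (fs k0 k1 km1 eT (s t) (c t)) <= V) ->
  forall t, 0 <= t ->
    (c t - w k1 km1 k2 eT (s t)) ^ 2
    <= (c 0 - w k1 km1 k2 eT (s 0)) ^ 2 * exp (- (tau0 km1 k2 * t))
       + (eps_c k1 km1 k2 eT * V) ^ 2 / tau0 km1 k2 ^ 2 * (1 - exp (- (tau0 km1 k2 * t))).
Proof.
  intros Hs Hc Hspos HV T HT.
  set (u := fun t => c t - w k1 km1 k2 eT (s t)).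
  set (g := fun t => Derive (w k1 km1 k2 eT) (s t) * fs k0 k1 km1 eT (s t) (c t)).
  set (D := fun t => k1 * s t + km1 + k2).
  set (tau := tau0 km1 k2). set (A := eps_c k1 km1 k2 eT * V).
  assert (Htau : 0 < tau) by (unfold tau, tau0; lra).
  assert (Hu : forall t, 0 <= t -> is_derive u t (- D t * u t - g t)).
  { intros t Ht. destruct (w_derive_bounds (s t) (Hspos t Ht)) as [dw [Hw _]].
    pose proof (is_derive_minus _ _ t _ _ (Hc t Ht) (is_derive_comp _ _ t _ _ Hw (Hs t Ht))) as Hd.
    unfold g, D, u. rewrite (is_derive_unique _ _ _ Hw).
    replace (- (k1 * s t + km1 + k2) * (c t - w k1 km1 k2 eT (s t))
             - dw * fs k0 k1 km1 eT (s t) (c t))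
      with (fc k1 km1 k2 eT (s t) (c t) - fs k0 k1 km1 eT (s t) (c t) * dw)
      by (rewrite fc_qss_form by auto; ring).
    exact Hd. }
  assert (Hrel : u T ^ 2 - (A / tau) ^ 2 <= (u 0 ^ 2 - (A / tau) ^ 2) * exp (- tau * T)).
  { apply (le_exp_of_is_derive_le_linear (fun t => u t ^ 2)
             (fun t => 2 * u t * (- D t * u t - g t))); [exact HT | |].
    - intros t Ht. replace (2 * u t * (- D t * u t - g t))
        with (INR 2 * (- D t * u t - g t) * u t ^ Nat.pred 2) by (simpl; ring).
      apply is_derive_pow, Hu. lra.
    - intros t Ht. apply sq_rate_le; [exact Htau | |].
      + unfold D, tau, tau0. pose proof (Hspos t (proj1 Ht)). nra.
      + destruct (w_derive_bounds (s t) (Hspos t (proj1 Ht))) as [dw [Hw Hdw]].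
        unfold g, A. rewrite (is_derive_unique _ _ _ Hw), Rabs_mult, (Rabs_right dw) by lra.
        apply Rmult_le_compat; [lra | apply Rabs_pos | lra | apply HV; lra]. }
  replace (- tau * T) with (- (tau * T)) in Hrel by ring.
  replace ((A / tau) ^ 2) with (A ^ 2 / tau ^ 2) in Hrel by (field; lra).
  change (c T - w k1 km1 k2 eT (s T)) with (u T).
  change (c 0 - w k1 km1 k2 eT (s 0)) with (u 0).
  lra.
Qed.

End ReactionSystem.

Theorem proposition4p5 (k0 k1 km1 k2 eT : R) (s c : R -> R) :
  0 < k0 -> 0 < k1 -> 0 < km1 -> 0 < k2 -> 0 < eT ->
  (forall t, 0 <= t -> is_derive s t (fs k0 k1 km1 eT (s t) (c t))) ->
  (forall t, 0 <= t -> is_derive c t (fc k1 km1 k2 eT (s t) (c t))) ->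
  W1 k0 k1 km1 k2 eT (s 0) (c 0) ->
  let L := fun t => Rabs (c t - w k1 km1 k2 eT (s t)) in
  (forall v : R,
     is_lub (fun y => exists t, 0 <= t /\ y = Rabs (fs k0 k1 km1 eT (s t) (c t))) v ->
     forall t, 0 <= t ->
       L t ^ 2 <= L 0 ^ 2 * exp (- (tau0 km1 k2 * t))
                  + (eps_c k1 km1 k2 eT * v) ^ 2 / tau0 km1 k2 ^ 2
                    * (1 - exp (- (tau0 km1 k2 * t)))) /\
  (forall t, 0 <= t ->
     L t ^ 2 <= L 0 ^ 2 * exp (- (tau0 km1 k2 * t))
                + (eps_c k1 km1 k2 eT * k0) ^ 2 / (km1 + k2) ^ 2) /\
  (eps_c k1 km1 k2 eT * k0) ^ 2 / (km1 + k2) ^ 2 = eps_star k0 k1 km1 k2 eT ^ 2.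
Proof.
  intros _ Hk1 Hkm1 Hk2 HeT Hs Hc HW L.
  destruct (W1_nonneg_rates k0 k1 km1 k2 eT Hk1 Hkm1 Hk2 _ _ HW) as [Hs0 [Hp0 Hq0]].
  pose proof (nonneg_rates_invariant k0 k1 km1 k2 eT Hk1 Hkm1 Hk2 HeT s c Hs Hc Hs0 Hp0 Hq0)
    as Hinv.
  assert (Hspos : forall t, 0 <= t -> 0 <= s t) by (intros t Ht; apply (Hinv t Ht)).
  assert (Hfs : forall t, 0 <= t -> Rabs (fs k0 k1 km1 eT (s t) (c t)) <= k0).
  { intros t Ht. destruct (Hinv t Ht) as [? [? ?]].
    rewrite Rabs_right by lra. now apply (fs_le_k0 k0 k1 km1 k2 eT). }
  pose proof (qss_deviation_sq_le k0 k1 km1 k2 eT Hk1 Hkm1 Hk2 HeT s c) as Hdev.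
  unfold L. split; [|split].
  - intros v [Hub _] t Ht. rewrite !pow2_abs.
    apply Hdev; auto. intros x Hx. apply Hub. now exists x.
  - intros t Ht. rewrite !pow2_abs.
    eapply Rle_trans; [apply (Hdev k0); auto|]. unfold tau0.
    pose proof (exp_pos (- ((km1 + k2) * t))).
    assert (0 <= (eps_c k1 km1 k2 eT * k0) ^ 2 / (km1 + k2) ^ 2).
    { unfold Rdiv. apply Rmult_le_pos; [apply pow2_ge_0|].
      apply Rlt_le, Rinv_0_lt_compat, pow_lt. lra. }
    nra.
  - unfold eps_c, eps_star. field. lra.
Qed.
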